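(* Let $R$ be a commutative ring with identity, $\mathcal S$ an associative $R$-algebra with identity, $\mathcal M$ a $2$-torsion free, jointly prime bimodule over $\mathcal S$, $\delta$ a derivation on $\mathcal S$ and $f:\mathcal S\to\mathcal M$ a bimodule homomorphism over $\mathcal S$. If $D:\mathcal S\to\mathcal M$ is a Jordan $(\delta,f)$-derivation on $\mathcal M$ and $x,y\in\mathcal S$ satisfy $xy=0$, then $D(xy)=D(x)y+f(x)\delta(y)=0$.
   Context: A derivation on $\mathcal S$ is an additive map $\delta$ with $\delta(ab)=\delta(a)b+a\delta(b)$. An additive map $D:\mathcal S\to\mathcal M$ is a Jordan $(\delta,f)$-derivation if $D(x^2)=D(x)x+f(x)\delta(x)$ for all $x\in\mathcal S$. $\mathcal M$ is $2$-torsion free if $2m=0$ implies $m=0$. A proper bisubmodule $\mathcal K$ of $\mathcal M$ is jointly prime if for every left ideal $I$, right ideal $J$ of $\mathcal S$ and bisubmodule $\mathcal N$ of $\mathcal M$, $I\mathcal N J\subseteq\mathcal K$ implies $I\mathcal M J\subseteq\mathcal K$ or $\mathcal N\subseteq\mathcal K$; $\mathcal M$ is jointly prime if $0$ is a jointly prime bisubmodule. *)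

From HB Require Import structures.
From mathcomp Require Import all_boot all_order all_algebra.
Set Implicit Arguments. Unset Strict Implicit. Unset Printing Implicit Defensive.
Import GRing.Theory.
Local Open Scope ring_scope.

(* Bimodule structure over an R-algebra S on an R-module M, given by a left
   action l a m = "a m" and a right action r m b = "m b". *)
Definition is_bimodule (R : comNzRingType) (S : algType R) (M : lmodType R)
  (l : S -> M -> M) (r : M -> S -> M) : Prop :=
  (forall a m n, l a (m + n) = l a m + l a n) /\
  (forall a b m, l (a + b) m = l a m + l b m) /\
  (forall m n b, r (m + n) b = r m b + r n b) /\
  (forall m a b, r m (a + b) = r m a + r m b) /\
  (forall a b m, l (a * b) m = l a (l b m)) /\
  (forall m a b, r m (a * b) = r (r m a) b) /\
  (forall a m b, r (l a m) b = l a (r m b)) /\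
  (forall m, l 1 m = m /\ r m 1 = m) /\
  (forall (k : R) a m b,
      l (k *: a) m = k *: l a m /\ l a (k *: m) = k *: l a m /\
      r m (k *: b) = k *: r m b /\ r (k *: m) b = k *: r m b).

Definition bisubmodule (R : comNzRingType) (S : algType R) (M : lmodType R)
  (l : S -> M -> M) (r : M -> S -> M) (K : M -> Prop) : Prop :=
  [/\ K 0, (forall m n, K m -> K n -> K (m - n)),
      (forall a m, K m -> K (l a m)) & (forall m b, K m -> K (r m b))].

Definition left_ideal (R : comNzRingType) (S : algType R) (I : S -> Prop) : Prop :=
  [/\ I 0, (forall a b, I a -> I b -> I (a - b)) & (forall s a, I a -> I (s * a))].

Definition right_ideal (R : comNzRingType) (S : algType R) (J : S -> Prop) : Prop :=
  [/\ J 0, (forall a b, J a -> J b -> J (a - b)) & (forall s a, J a -> J (a * s))].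

(* K is a jointly prime bisubmodule of M.  "I N J ⊆ K" means every product
   a n b (a in I, n in N, b in J) lies in K; since K is additively closed this
   is the same as the additive span of such products lying in K. *)
Definition jointly_prime_sub (R : comNzRingType) (S : algType R) (M : lmodType R)
  (l : S -> M -> M) (r : M -> S -> M) (K : M -> Prop) : Prop :=
  [/\ bisubmodule l r K, (exists m, ~ K m) &
      forall (I J : S -> Prop) (N : M -> Prop),
        left_ideal I -> right_ideal J -> bisubmodule l r N ->
        (forall a n b, I a -> N n -> J b -> K (r (l a n) b)) ->
        (forall a m b, I a -> J b -> K (r (l a m) b)) \/ (forall n, N n -> K n)].

Definition jointly_prime (R : comNzRingType) (S : algType R) (M : lmodType R)
  (l : S -> M -> M) (r : M -> S -> M) : Prop :=
  jointly_prime_sub l r (fun m => m = 0).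

Definition two_torsion_free (V : zmodType) : Prop :=
  forall m : V, m *+ 2 = 0 -> m = 0.

Definition additive_map (U V : zmodType) (g : U -> V) : Prop :=
  forall a b, g (a + b) = g a + g b.

Definition derivation (R : comNzRingType) (S : algType R) (d : S -> S) : Prop :=
  additive_map d /\ forall a b, d (a * b) = d a * b + a * d b.

Definition bimodule_hom (R : comNzRingType) (S : algType R) (M : lmodType R)
  (l : S -> M -> M) (r : M -> S -> M) (f : S -> M) : Prop :=
  [/\ additive_map f, (forall a s, f (a * s) = l a (f s)) &
      (forall s b, f (s * b) = r (f s) b)].

Definition jordan_df_derivation (R : comNzRingType) (S : algType R) (M : lmodType R)
  (r : M -> S -> M) (d : S -> S) (f : S -> M) (D : S -> M) : Prop :=
  additive_map D /\ forall x, D (x * x) = r (D x) x + r (f x) (d x).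

From mathcomp Require Import all_boot all_order all_algebra.
Set Implicit Arguments. Unset Strict Implicit.
Import GRing.Theory.
Local Open Scope ring_scope.

(* Because S has an identity, linearizing the Jordan identity at x and 1 gives
   D(x) = D(1) x + f(1) δ(x).  As δ is a derivation and f(x) = f(1) x, this makes
   D a genuine (δ,f)-derivation, D(xy) = D(x) y + f(x) δ(y), and xy = 0 then gives
   D(xy) = D(0) = 0. *)

Lemma additive_map0 (U V : zmodType) (g : U -> V) : additive_map g -> g 0 = 0.
Proof. by move=> gD; apply: (@addrI _ (g 0)); rewrite -gD !addr0. Qed.

Lemma derivation1 (R : comNzRingType) (S : algType R) (d : S -> S) :
  derivation d -> d 1 = 0.
Proof.
move=> [_ dM]; apply: (@addrI _ (d 1)).
by rewrite addr0 -[in RHS](mulr1 1) dM mulr1 mul1r.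
Qed.

Section UnitalJordanDerivation.

Variables (R : comNzRingType) (S : algType R) (M : lmodType R) (r : M -> S -> M).
Hypothesis rmodDl : forall m n b, r (m + n) b = r m b + r n b.
Hypothesis rmodDr : forall m a b, r m (a + b) = r m a + r m b.
Hypothesis rmodM : forall m a b, r m (a * b) = r (r m a) b.
Hypothesis rmod1 : forall m, r m 1 = m.

Variables (d : S -> S) (f : S -> M) (D : S -> M).
Hypothesis d_der : derivation d.
Hypothesis fD : additive_map f.
Hypothesis fMr : forall s b, f (s * b) = r (f s) b.
Hypothesis D_jordan : jordan_df_derivation r d f D.

Lemma rmod0 m : r m 0 = 0.
Proof. exact: additive_map0 (rmodDr m). Qed.

Lemma jordan_df_derivation_polar a b :
  D (a * b + b * a) = r (D a) b + r (D b) a + (r (f a) (d b) + r (f b) (d a)).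
Proof.
have [dD _] := d_der; have [DD DJ] := D_jordan.
have := DJ (a + b); rewrite mulrDl !mulrDr !DD !DJ fD dD !rmodDl !rmodDr.
(* Move the two expanded squares to the front of both sides and cancel them. *)
rewrite [X in X = _ -> _](AC (3*(1*2)) ((1*2*5*6)*(3*4))).
rewrite [X in _ = X -> _](AC ((2*2)*(2*2)) ((1*5*4*8)*((2*3)*(6*7)))).
by move=> /addrI.
Qed.

Lemma jordan_df_derivation_unitalE a : D a = r (D 1) a + r (f 1) (d a).
Proof.
have := jordan_df_derivation_polar a 1.
rewrite mulr1 mul1r D_jordan.1 rmod1 derivation1 // rmod0 add0r -addrA.
by move=> /addrI.
Qed.

Lemma jordan_df_derivationM x y : D (x * y) = r (D x) y + r (f x) (d y).
Proof.
have fE : f x = r (f 1) x by rewrite -fMr mul1r.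
rewrite (jordan_df_derivation_unitalE (x * y)) (jordan_df_derivation_unitalE x).
by rewrite d_der.2 fE rmodDr rmodDl -!rmodM addrA.
Qed.

End UnitalJordanDerivation.

Theorem lemma3p11 (R : comNzRingType) (S : algType R) (M : lmodType R)
  (l : S -> M -> M) (r : M -> S -> M)
  (d : S -> S) (f : S -> M) (D : S -> M) :
  is_bimodule l r -> two_torsion_free M -> jointly_prime l r ->
  derivation d -> bimodule_hom l r f -> jordan_df_derivation r d f D ->
  forall x y : S, x * y = 0 ->
    D (x * y) = r (D x) y + r (f x) (d y) /\ r (D x) y + r (f x) (d y) = 0.
Proof.
move=> [_ [_ [rmodDl [rmodDr [_ [rmodM [_ [act1 _]]]]]]]] _ _ d_der
  [fD _ fMr] D_jordan x y xy0.
have rmod1 m : r m 1 = m by have [] := act1 m.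
have DM := jordan_df_derivationM rmodDl rmodDr rmodM rmod1 d_der fD fMr D_jordan.
split; first exact: DM.
by rewrite -DM xy0 (additive_map0 D_jordan.1).
Qed.
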